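(* Let $n\ge2$ and let $\mathbf{r}$ be an $\mathbb{R}^n$-valued random vector with $\mathbb{E}|r_i|<\infty$ for all $i$; set $\mathbf{R}=e^{\mathbf{r}}$ (componentwise), $\mathbf{m}=\mathbb{E}[\mathbf{r}]$, and $J(\boldsymbol{\pi})=\mathbb{E}[\gamma(\boldsymbol{\pi},\mathbf{r})]=\mathbb{E}[\log\langle\boldsymbol{\pi},\mathbf{R}\rangle]-\langle\boldsymbol{\pi},\mathbf{m}\rangle$ for $\boldsymbol{\pi}\in\Delta_n$ (which is finite). Then $\boldsymbol{\pi}^\star\in\Delta_n$ maximizes $J$ over $\Delta_n$ if and only if $$\mathbb{E}\Big[\frac{\langle\boldsymbol{\pi},\mathbf{R}\rangle}{\langle\boldsymbol{\pi}^\star,\mathbf{R}\rangle}\Big]\le1+\langle\boldsymbol{\pi}-\boldsymbol{\pi}^\star,\mathbf{m}\rangle\quad\text{for every }\boldsymbol{\pi}\in\Delta_n,$$ with equality for every $\boldsymbol{\pi}\in\Delta_n$ satisfying $\supp(\boldsymbol{\pi})\subseteq\supp(\boldsymbol{\pi}^\star)$.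
   Context: $\Delta_n=\{\mathbf{x}\in[0,1]^n:\sum_ix_i=1\}$; $\supp(\mathbf{x})=\{i:x_i>0\}$. For $\boldsymbol{\pi}\in\Delta_n$ and $\mathbf{r}\in\mathbb{R}^n$, $\gamma(\boldsymbol{\pi},\mathbf{r})=\log\big(\sum_{i\in\supp(\boldsymbol{\pi})}\pi_ie^{r_i}\big)-\sum_{i\in\supp(\boldsymbol{\pi})}\pi_ir_i$. The expectation of a nonnegative random variable may equal $+\infty$. *)

From HB Require Import structures.
From mathcomp Require Import all_boot all_order all_algebra.
From mathcomp Require Import all_classical all_reals all_analysis.
Set Implicit Arguments. Unset Strict Implicit. Unset Printing Implicit Defensive.
Import Order.TTheory GRing.Theory Num.Theory.
Local Open Scope ring_scope.

Definition simplex (R : realType) (n : nat) (x : 'I_n -> R) : Prop :=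
  (forall i, 0 <= x i) /\ \sum_(i < n) x i = 1.

Definition supp_sub (R : realType) (n : nat) (x y : 'I_n -> R) : Prop :=
  forall i, 0 < x i -> 0 < y i.

Definition dotv (R : realType) (n : nat) (x y : 'I_n -> R) : R :=
  \sum_(i < n) x i * y i.

Definition gamma (R : realType) (n : nat) (p r : 'I_n -> R) : R :=
  ln (\sum_(i < n | 0 < p i) p i * expR (r i)) - \sum_(i < n | 0 < p i) p i * r i.

Definition expv (R : realType) (n : nat) (r : 'I_n -> R) : 'I_n -> R :=
  fun i => expR (r i).

Section Obj.
Context (d : measure_display) (T : measurableType d) (R : realType)
  (P : probability T R) (n : nat) (r : T -> 'I_n -> R).

Definition meanv : 'I_n -> R := fun i => fine (\int[P]_x (r x i)%:E).

Definition Jobj (p : 'I_n -> R) : \bar R := \int[P]_x (gamma p (r x))%:E.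
End Obj.

From HB Require Import structures.
From mathcomp Require Import all_boot all_order all_algebra.
From mathcomp Require Import all_classical all_reals all_analysis.
From mathcomp Require Import measurable_realfun ring lra.
Set Implicit Arguments. Unset Strict Implicit.
Import Order.TTheory GRing.Theory Num.Theory.
Local Open Scope ring_scope.

(* The objective J(p) = E[ln <p, R>] - <p, m> is concave in p.  Write
   Q = <p, R> / <pstar, R>.  If pstar is optimal, comparing J at pstar and at
   the mixture (1 - t) pstar + t p gives E[ln (t Q + 1 - t)] <= t <p - pstar, m>;
   a quadratic lower bound of ln near 1, applied to Q truncated at M, lets
   t -> 0, and monotone convergence in M then yields
   E[Q] <= 1 + <p - pstar, m>.  When supp p is contained in supp pstar, the
   extrapolation (1 + s) pstar - s p is still a portfolio for small s > 0, its
   ratio is 1 + s - s Q, and the same inequality for it is the reverse one.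
   Conversely, ln Q <= Q - 1 turns the inequality into J(p) <= J(pstar). *)

Section Simplex.
Context (R : realType) (n : nat).
Implicit Types (p q z : 'I_n -> R).

Lemma dotv_comb a b p q z :
  dotv (fun i => a * p i + b * q i) z = a * dotv p z + b * dotv q z.
Proof.
rewrite /dotv !mulr_sumr -big_split /=; apply: eq_bigr => i _.
by rewrite mulrDl !mulrA.
Qed.

Lemma dotvBl p q z : dotv (fun i => p i - q i) z = dotv p z - dotv q z.
Proof. by rewrite /dotv -sumrB; apply: eq_bigr => i _; rewrite mulrBl. Qed.

Lemma simplex_le1 p : simplex p -> forall i, p i <= 1.
Proof.
move=> [p0 p1] i; rewrite -p1 (bigD1 i) //= lerDl.
by apply: sumr_ge0 => j _.
Qed.

Lemma simplex_comb p q a : simplex p -> simplex q -> 0 <= a <= 1 ->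
  simplex (fun i => (1 - a) * p i + a * q i).
Proof.
move=> [p0 p1] [q0 q1] /andP[a0 a1]; split.
  by move=> i; rewrite addr_ge0 // mulr_ge0 // subr_ge0.
by rewrite big_split /= -!mulr_sumr p1 q1 !mulr1 subrK.
Qed.

(* The product of the positive weights of [p] is below each of them, so it
   is a step size that keeps the extrapolation nonnegative. *)
Lemma simplex_extrapolation p q : simplex p -> simplex q -> supp_sub q p ->
  exists2 s, 0 < s & simplex (fun i => (1 - - s) * p i + - s * q i).
Proof.
move=> sp [q0 q1] hsub; have [p0 p1] := sp.
set s := \prod_(i < n | 0 < p i) p i.
have s_le i : 0 < p i -> s <= p i.
  move=> hi; rewrite /s (bigD1 i) //= -[leRHS]mulr1.
  apply: ler_wpM2l; first exact: ltW.
  by apply: prodr_ile1 => j /andP[hj _]; rewrite ltW //= simplex_le1.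
have p_eq0 i : ~~ (0 < p i) -> p i = 0.
  by move=> hi; apply/eqP; rewrite eq_le p0 andbT leNgt.
have s0 : 0 < s by apply: prodr_gt0.
exists s => //.
split; last by rewrite big_split /= -!mulr_sumr p1 q1; ring.
move=> i; have [hi|hi] := boolP (0 < p i).
  have := s_le i hi; have := p0 i; have := simplex_le1 (conj q0 q1) i; have := q0 i; nra.
have qi0 : q i = 0.
  apply/eqP; rewrite eq_le q0 andbT leNgt.
  by apply/negP => /hsub; rewrite (negbTE hi).
by rewrite p_eq0 // qi0 !mulr0 addr0.
Qed.

Lemma gamma_simplex p z : simplex p -> gamma p z = ln (dotv p (expv z)) - dotv p z.
Proof.
move=> [p0 _]; rewrite /gamma /dotv /expv.
rewrite (big_mkcond (fun i => 0 < p i)) [X in _ - X](big_mkcond (fun i => 0 < p i)).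
have p_eq0 i : ~~ (0 < p i) -> p i = 0.
  by move=> hp; apply/eqP; rewrite eq_le p0 andbT leNgt.
congr (ln _ - _); apply: eq_bigr => i _; case: ifPn => // /p_eq0 ->; by rewrite mul0r.
Qed.

Lemma dotv_expv_bounds p z : simplex p ->
  expR (- \sum_(i < n) `|z i|) <= dotv p (expv z) <= expR (\sum_(i < n) `|z i|).
Proof.
move=> [p0 p1]; have zb i : `|z i| <= \sum_(j < n) `|z j|.
  by rewrite (bigD1 i) //= lerDl; apply: sumr_ge0.
apply/andP; split.
  rewrite -[leLHS]mul1r -p1 mulr_suml /dotv; apply: ler_sum => i _.
  apply: ler_wpM2l => //; rewrite /expv ler_expR lerNl.
  by apply: le_trans (zb i); rewrite -normrN ler_norm.
rewrite -[leRHS]mul1r -p1 mulr_suml /dotv; apply: ler_sum => i _.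
apply: ler_wpM2l => //; rewrite /expv ler_expR.
by apply: le_trans (zb i); rewrite ler_norm.
Qed.

Lemma dotv_expv_gt0 p z : simplex p -> 0 < dotv p (expv z).
Proof.
by move=> sp; case/andP: (dotv_expv_bounds z sp) => + _; apply: lt_le_trans; rewrite expR_gt0.
Qed.

Lemma normr_ln_dotv_expv p z : simplex p ->
  `|ln (dotv p (expv z))| <= \sum_(i < n) `|z i|.
Proof.
move=> sp; have /andP[lo hi] := dotv_expv_bounds z sp.
have pos := dotv_expv_gt0 z sp.
rewrite ler_norml; apply/andP; split.
  by rewrite -[leLHS]expRK ler_ln ?posrE ?expR_gt0.
by rewrite -[leRHS]expRK ler_ln ?posrE ?expR_gt0.
Qed.

End Simplex.

Lemma ln_le_subr1 (R : realType) (x : R) : 0 < x -> ln x <= x - 1.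
Proof.
move=> x0; rewrite -[X in ln X](subrK 1 x) addrC; apply: le_ln1Dx.
by rewrite ltrBrDl subrr.
Qed.

(* A quadratic lower bound for [ln] near [1], made uniform in [q] by
   truncating [q] at [M]; it comes from [ln z >= 1 - 1/z >= (z - 1) - 2 (z - 1)^2]
   for [z >= 1/2]. *)
Lemma ln_interp_ge (R : realType) (q M t : R) : 0 <= q -> 0 <= M -> 0 < t -> t <= 1/2 ->
  t * Num.min q M - t * (1 + 2 * t * (M + 1) ^+ 2) <= ln (t * q + (1 - t)).
Proof.
move=> q0 M0 t0 th.
set y := Num.min q M.
have y0 : 0 <= y by rewrite le_min q0 M0.
have yq : y <= q by rewrite ge_min lexx.
have yM : y <= M by rewrite ge_min lexx orbT.
set z := t * y + (1 - t).
have zh : 1/2 <= z.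
  have : 0 <= t * y by rewrite mulr_ge0 // ltW.
  rewrite /z; lra.
have z0 : 0 < z by lra.
have lnz : ln z <= ln (t * q + (1 - t)).
  have tyq : t * y <= t * q by rewrite ler_wpM2l // ltW.
  by rewrite ler_ln // ?posrE; rewrite /z in z0 *; lra.
have zi0 : 0 < z^-1 by rewrite invr_gt0.
have inv_le : 1 - z^-1 <= ln z.
  by have := ln_le_subr1 zi0; rewrite lnV ?posrE //; lra.
have quad : (z - 1) - 2 * (z - 1) ^+ 2 <= 1 - z^-1.
  have -> : 1 - z^-1 = (z - 1) - 2 * (z - 1) ^+ 2 + z^-1 * (z - 1) ^+ 2 * (2 * z - 1).
    by field; rewrite gt_eqF.
  rewrite lerDl; apply: mulr_ge0; last lra.
  by apply: mulr_ge0; [exact: ltW | exact: sqr_ge0].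
have sq : (z - 1) ^+ 2 <= t ^+ 2 * (M + 1) ^+ 2.
  have -> : z - 1 = t * (y - 1) by rewrite /z; ring.
  rewrite exprMn ler_wpM2l ?sqr_ge0 // -subr_ge0.
  have -> : (M + 1) ^+ 2 - (y - 1) ^+ 2 = (M - y + 2) * (M + y) by ring.
  apply: mulr_ge0; lra.
have zE : z - 1 = t * y - t by rewrite /z; ring.
have : t * y - t - 2 * (t ^+ 2 * (M + 1) ^+ 2) <= ln (t * q + (1 - t)) by lra.
by congr (_ <= _); ring.
Qed.

Section ProbabilityIntegral.
Context (d : measure_display) (T : measurableType d) (R : realType)
  (P : probability T R).

Lemma integral_Rintegral (f : T -> R) : P.-integrable setT (EFin \o f) ->
  (\int[P]_x (f x)%:E = (Rintegral P setT f)%:E)%E.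
Proof. by move=> h; rewrite /Rintegral fineK //; exact: integrable_fin_num h. Qed.

Lemma integrableB_fun (f g : T -> R) :
  P.-integrable setT (EFin \o f) -> P.-integrable setT (EFin \o g) ->
  P.-integrable setT (EFin \o (fun x => f x - g x)).
Proof.
move=> hf hg; have h := integrableB measurableT hf hg.
by apply: eq_integrable h => // x _; rewrite /= EFinB.
Qed.

Lemma integrable_affine (f : T -> R) a b : P.-integrable setT (EFin \o f) ->
  P.-integrable setT (EFin \o (fun x => a * f x + b)).
Proof.
move=> h.
have h2 := integrableD measurableT (integrableZl measurableT a h)
   (finite_measure_integrable_cst P b measurableT).
by apply: eq_integrable h2 => // x _; rewrite /= EFinD EFinM.
Qed.

Lemma Rintegral_affine (f : T -> R) a b : P.-integrable setT (EFin \o f) ->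
  Rintegral P setT (fun x => a * f x + b) = a * Rintegral P setT f + b.
Proof.
move=> h; rewrite RintegralD //; last exact: finite_measure_integrable_cst.
  have P1 : fine (P [set: T]%classic) = 1 by rewrite probability_setT.
  by rewrite RintegralZl // Rintegral_cst // P1 mulr1.
have h2 := integrableZl measurableT a h.
by apply: eq_integrable h2 => // x _; rewrite /= EFinM.
Qed.

End ProbabilityIntegral.

Section LogOptimal.
Context (d : measure_display) (T : measurableType d) (R : realType)
  (P : probability T R) (n : nat) (r : T -> 'I_n -> R)
  (hint : forall i : 'I_n, P.-integrable setT (fun x => (r x i)%:E)).

Definition wealth (p : 'I_n -> R) x := dotv p (expv (r x)).

Lemma measurable_wealth p : measurable_fun setT (wealth p).
Proof.
apply: measurable_sum => i; apply: measurable_funM => //.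
apply: measurableT_comp (@measurable_expR R) _.
by apply/measurable_EFinP; exact: measurable_int (hint i).
Qed.

Lemma measurable_ln_wealth p : measurable_fun setT (fun x => ln (wealth p x)).
Proof. exact: measurableT_comp (@measurable_ln R) (measurable_wealth p). Qed.

Lemma integrable_ln_wealth p : simplex p ->
  P.-integrable setT (EFin \o (fun x => ln (wealth p x))).
Proof.
move=> sp; pose S x := \sum_(i < n) `|r x i|.
have iS : P.-integrable setT (EFin \o S).
  have -> : EFin \o S = (fun x => \sum_(i < n) (`|r x i|)%:E)%E.
    by apply/funext => x /=; rewrite sumEFin.
  apply: (integrable_sum measurableT) => i _.
  exact: (integrable_norm (D:=setT) (f:=fun x => r x i) (hint i)).
apply: (le_integrable measurableT _ _ iS).
  exact/measurable_EFinP/measurable_ln_wealth.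
move=> x _ /=; rewrite lee_fin [leRHS]ger0_norm ?sumr_ge0 //.
exact: normr_ln_dotv_expv.
Qed.

Lemma integral_dotv p :
  (\int[P]_x (dotv p (r x))%:E = \sum_(i < n) ((p i)%:E * \int[P]_x (r x i)%:E))%E.
Proof.
under eq_integral do rewrite /dotv -sumEFin.
rewrite (integral_sum measurableT); last first.
  by move=> i; exact: (integrableZl measurableT (p i) (hint i)).
by apply: eq_bigr => i _; under eq_integral do rewrite EFinM; rewrite integralZl.
Qed.

Lemma integrable_dotv p : P.-integrable setT (EFin \o (fun x => dotv p (r x))).
Proof.
have -> : EFin \o (fun x => dotv p (r x)) =
    (fun x => \sum_(i < n) ((p i)%:E * (r x i)%:E))%E.
  by apply/funext => x /=; rewrite /dotv sumEFin.
apply: (integrable_sum measurableT) => i _.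
exact: (integrableZl measurableT (p i) (hint i)).
Qed.

Lemma Rintegral_dotv p : Rintegral P setT (fun x => dotv p (r x)) = dotv p (meanv P r).
Proof.
rewrite /Rintegral integral_dotv /dotv /meanv.
have fin i : (\int[P]_x (r x i)%:E)%E \is a fin_num by exact: integrable_fin_num (hint i).
under eq_bigr => i _ do rewrite -(fineK (fin i)) -EFinM.
by rewrite sumEFin.
Qed.

Lemma Jobj_simplex p : simplex p ->
  Jobj P r p = (Rintegral P setT (fun x => ln (wealth p x)) - dotv p (meanv P r))%:E.
Proof.
move=> sp; rewrite /Jobj.
under eq_integral do rewrite gamma_simplex //.
have iln := integrable_ln_wealth sp; have idot := integrable_dotv p.
by rewrite integral_Rintegral ?RintegralB ?Rintegral_dotv //; exact: integrableB_fun.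
Qed.

Variables (pstar : 'I_n -> R) (hpstar : simplex pstar).

Definition ratio p x := wealth p x / wealth pstar x.

Notation ratio_bound p := (1 + dotv (fun i => p i - pstar i) (meanv P r)).

Lemma ratio_gt0 p x : simplex p -> 0 < ratio p x.
Proof. by move=> sp; rewrite divr_gt0 // dotv_expv_gt0. Qed.

Lemma ln_ratio p x : simplex p -> ln (ratio p x) = ln (wealth p x) - ln (wealth pstar x).
Proof. by move=> sp; rewrite ln_div // posrE dotv_expv_gt0. Qed.

Lemma ratio_comb a p x :
  ratio (fun i => (1 - a) * pstar i + a * p i) x = a * ratio p x + (1 - a).
Proof.
rewrite /ratio /wealth dotv_comb; field.
by rewrite gt_eqF // dotv_expv_gt0.
Qed.

Lemma measurable_ratio p : simplex p -> measurable_fun setT (ratio p).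
Proof.
move=> sp; have -> : ratio p = fun x => expR (ln (wealth p x) - ln (wealth pstar x)).
  by apply/funext => x; rewrite -ln_ratio // lnK // posrE ratio_gt0.
by apply: measurableT_comp => //; apply: measurable_funB; exact: measurable_ln_wealth.
Qed.

Lemma integrable_ratio p : simplex p -> (\int[P]_x (ratio p x)%:E < +oo)%E ->
  P.-integrable setT (EFin \o ratio p).
Proof.
move=> sp h; apply/integrableP; split; first exact/measurable_EFinP/measurable_ratio.
apply: le_lt_trans h; rewrite le_eqVlt; apply/orP; left; apply/eqP.
by apply: eq_integral => x _ /=; rewrite ger0_norm // ltW // ratio_gt0.
Qed.

Lemma Jobj_le_of_integral_ratio_le p : simplex p ->
  (\int[P]_x (ratio p x)%:E <= (ratio_bound p)%:E)%E -> (Jobj P r p <= Jobj P r pstar)%E.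
Proof.
move=> sp Hp.
have iQ := integrable_ratio sp (le_lt_trans Hp (ltey _)).
rewrite integral_Rintegral // lee_fin dotvBl in Hp.
rewrite !Jobj_simplex // lee_fin.
suff : Rintegral P setT (fun x => ln (wealth p x)) - Rintegral P setT (fun x => ln (wealth pstar x))
   <= Rintegral P setT (ratio p) - 1 by lra.
rewrite -RintegralB //; try exact: integrable_ln_wealth.
rewrite -[X in _ <= X - _]mul1r -Rintegral_affine //.
apply: le_Rintegral => //.
- by apply: integrableB_fun; exact: integrable_ln_wealth.
- exact: integrable_affine.
by move=> x _; rewrite -ln_ratio // mul1r; exact/ln_le_subr1/ratio_gt0.
Qed.

Lemma integral_ratio_eq :
  (forall p, simplex p -> (\int[P]_x (ratio p x)%:E <= (ratio_bound p)%:E)%E) ->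
  forall p, simplex p -> supp_sub p pstar ->
  (\int[P]_x (ratio p x)%:E = (ratio_bound p)%:E)%E.
Proof.
move=> Hle p sp hsub.
have [s s0 sp'] := simplex_extrapolation hpstar sp hsub.
have Hp := Hle p sp.
have iQ := integrable_ratio sp (le_lt_trans Hp (ltey _)).
have Hp' := Hle _ sp'.
rewrite (eq_integral (fun x => (- s * ratio p x + (1 - - s))%:E)) in Hp'; last first.
  by move=> x _; rewrite ratio_comb.
rewrite integral_Rintegral ?Rintegral_affine // in Hp'; last exact: integrable_affine.
rewrite lee_fin !dotvBl dotv_comb in Hp'.
rewrite integral_Rintegral // lee_fin dotvBl in Hp.
rewrite integral_Rintegral // dotvBl; congr EFin.
apply/eqP; rewrite eq_le Hp /=.
move: Hp'; set a := dotv p _; set b := dotv pstar _; set I := Rintegral _ _ _ => Hp'.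
have : s * (1 + (a - b) - I) <= 0 by nra.
by rewrite pmulr_rle0 //; lra.
Qed.

Section Optimal.
Hypothesis Hopt : forall p, simplex p -> (Jobj P r p <= Jobj P r pstar)%E.

Lemma Rintegral_ln_interp_ratio_le p t : simplex p -> 0 <= t <= 1 ->
  P.-integrable setT (EFin \o (fun x => ln (t * ratio p x + (1 - t)))) /\
  Rintegral P setT (fun x => ln (t * ratio p x + (1 - t)))
    <= t * dotv (fun i => p i - pstar i) (meanv P r).
Proof.
move=> sp t01; have spt := simplex_comb hpstar sp t01.
have lnE : (fun x => ln (t * ratio p x + (1 - t))) =
    (fun x => ln (wealth (fun i => (1 - t) * pstar i + t * p i) x) - ln (wealth pstar x)).
  by apply/funext => x; rewrite -ln_ratio // ratio_comb.
rewrite lnE; split; first by apply: integrableB_fun; exact: integrable_ln_wealth.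
have := Hopt spt; rewrite !Jobj_simplex // lee_fin dotv_comb dotvBl.
rewrite RintegralB //; [nra | exact: integrable_ln_wealth..].
Qed.

Lemma Rintegral_min_ratio_le p M : simplex p -> 0 <= M ->
  P.-integrable setT (EFin \o (fun x => Num.min (ratio p x) M)) /\
  Rintegral P setT (fun x => Num.min (ratio p x) M) <= ratio_bound p.
Proof.
move=> sp M0; set c := dotv _ _; set Y := fun x => _.
have iY : P.-integrable setT (EFin \o Y).
  apply: (le_integrable measurableT _ _ (finite_measure_integrable_cst P M measurableT)).
    exact/measurable_EFinP/(measurable_minr (measurable_ratio sp) (measurable_cst M)).
  move=> x _ /=; rewrite lee_fin (ger0_norm M0) ger0_norm ?ge_min ?lexx ?orbT //.
  by rewrite le_min M0 ltW // ratio_gt0.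
split => //; set K := (M + 1) ^+ 2.
have small t : 0 < t -> t <= 1/2 -> Rintegral P setT Y <= 1 + c + 2 * t * K.
  move=> t0 th; have t01 : 0 <= t <= 1 by apply/andP; split; lra.
  have [iln lnle] := Rintegral_ln_interp_ratio_le sp t01.
  have : Rintegral P setT (fun x => t * Y x - t * (1 + 2 * t * K))
      <= Rintegral P setT (fun x => ln (t * ratio p x + (1 - t))).
    apply: le_Rintegral => //; first exact: integrable_affine.
    by move=> x _; apply: ln_interp_ge => //; rewrite ltW // ratio_gt0.
  rewrite Rintegral_affine // => low.
  have : t * (Rintegral P setT Y - 1 - c - 2 * t * K) <= 0 by rewrite -/c in lnle; nra.
  by rewrite pmulr_rle0 //; lra.
apply/ler_addgt0Pr => e e0.
have K0 : 0 < K by rewrite exprn_gt0 //; lra.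
have h2K : 0 < 2 * K by rewrite mulr_gt0.
pose t := Num.min (1/2) (e / (2 * K)).
have t0 : 0 < t by rewrite lt_min; apply/andP; split; [lra | rewrite divr_gt0].
have te : 2 * t * K <= e.
  have : t <= e / (2 * K) by rewrite ge_min lexx orbT.
  by rewrite ler_pdivlMr // => h; lra.
have th : t <= 1/2 by rewrite ge_min lexx.
by have := small t t0 th; lra.
Qed.

Lemma integral_ratio_le p : simplex p ->
  (\int[P]_x (ratio p x)%:E <= (ratio_bound p)%:E)%E.
Proof.
move=> sp; pose g (k : nat) x := (Num.min (ratio p x) k%:R)%:E.
have mg k : measurable_fun setT (g k).
  exact/measurable_EFinP/(measurable_minr (measurable_ratio sp) (measurable_cst _)).
have g0 k x : setT x -> (0 <= g k x)%E.
  by move=> _; rewrite /g lee_fin le_min ler0n ltW // ratio_gt0.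
have ndg x : setT x -> {homo g^~ x : a b / (a <= b)%N >-> (a <= b)%E}.
  by move=> _ a b ab; rewrite lee_fin le_min ge_min lexx /= ge_min ler_nat ab orbT.
have lim x : limn (g^~ x) = (ratio p x)%:E.
  apply: cvg_lim => //; apply: cvg_near_cst.
  exists (Num.trunc (ratio p x)).+1 => // k /= hk.
  rewrite /g min_l //; apply: ltW; apply: lt_le_trans (truncnS_gt _) _.
  by rewrite ler_nat.
have mct := cvg_monotone_convergence (mu:=P) measurableT mg g0 ndg.
under eq_integral do rewrite -lim.
rewrite -(cvg_lim _ mct) //.
apply: lime_le; first by apply/cvg_ex; eexists; exact: mct.
apply: nearW => k; have [ik hk] := Rintegral_min_ratio_le sp (ler0n R k).
by rewrite /g integral_Rintegral // lee_fin.
Qed.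

End Optimal.
End LogOptimal.

Theorem mainTheorem19 (d : measure_display) (T : measurableType d) (R : realType)
  (P : probability T R) (n : nat) (r : T -> 'I_n -> R)
  (hn : (2 <= n)%N)
  (hint : forall i : 'I_n, P.-integrable setT (fun x => (r x i)%:E))
  (pstar : 'I_n -> R) (hpstar : simplex pstar) :
  (forall p : 'I_n -> R, simplex p -> (Jobj P r p <= Jobj P r pstar)%E)
  <->
  ((forall p : 'I_n -> R, simplex p ->
     ((\int[P]_x ((dotv p (expv (r x)) / dotv pstar (expv (r x)))%R%:E))
       <= (1 + dotv (fun i => p i - pstar i) (meanv P r))%R%:E)%E)
   /\
   (forall p : 'I_n -> R, simplex p -> supp_sub p pstar ->
     (\int[P]_x ((dotv p (expv (r x)) / dotv pstar (expv (r x)))%R%:E))%E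
       = (1 + dotv (fun i => p i - pstar i) (meanv P r))%R%:E)).
Proof.
split=> [Hopt | [Hle _] p sp].
- have Hle := integral_ratio_le hint hpstar Hopt.
  by split=> //; exact (integral_ratio_eq hint hpstar Hle).
- exact (Jobj_le_of_integral_ratio_le hint hpstar sp (Hle p sp)).
Qed.
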